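(* Let $f:[0,\infty)\to\mathbb{C}$ be smooth with support in $[0,\rho]$ for some $\rho<1$. For $i,j\in\mathbb{N}_0$ and $t\in(0,1)$ let $$G_{i,j}(t)=\int_{1-t}^{1}u f(u)\,[Q(t,u)]^{i}\,(u^{2}+1-t^{2})^{j}\,\mathrm{d}u,\qquad Q(t,u)=((1+t)^2-u^2)(u^2-(1-t)^2),$$ and $h_k(t)=G_{k,0}(t)=\int_{1-t}^{1}uf(u)[Q(t,u)]^k\,\mathrm{d}u$. Then for every $k\geq 1$ and $t\in(0,1)$, $$\left[D^{2k}h_{k}\right](t)=\left[D^{2k}G_{k,0}\right](t)=k!\,4^{k}\sum_{j=0}^{k-1}(-1)^{j}\frac{(k-1+j)!}{(k-1-j)!\,j!}\left[D^{k-j}G_{0,k-j}\right](t).$$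
   Context: $D$ denotes the operator $(D\varphi)(t)=\frac{1}{t}\varphi'(t)$ and $D^{j}$ its $j$-fold iterate. *)

From Stdlib Require Import Reals Factorial.
From Coquelicot Require Import Coquelicot.
Open Scope R_scope.

Definition Q (t u : R) : R := ((1 + t)^2 - u^2) * (u^2 - (1 - t)^2).

Definition G (f : R -> C) (i j : nat) (t : R) : C :=
  @RInt C_R_CompleteNormedModule
    (fun u : R => (RtoC (u * (Q t u)^i * (u^2 + 1 - t^2)^j) * f u)%C) (1 - t) 1.

Definition h (f : R -> C) (k : nat) (t : R) : C := G f k 0 t.

Definition Dop (phi : R -> C) (t : R) : C :=
  (Derive (fun s => Re (phi s)) t / t, Derive (fun s => Im (phi s)) t / t).

Definition Dpow (j : nat) (phi : R -> C) : R -> C := Nat.iter j Dop phi.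

Definition smooth_at (f : R -> C) (x : R) : Prop :=
  forall n : nat, ex_derive_n (fun s => Re (f s)) n x /\
                  ex_derive_n (fun s => Im (f s)) n x.

From Stdlib Require Import Reals Factorial Lia Lra.
From Coquelicot Require Import Coquelicot.
Open Scope R_scope.

(* Since d/dt Q(t,u) = 4t (u^2+1-t^2), d/dt (u^2+1-t^2) = -2t and Q(t,1-t) = 0,
   differentiation under the integral sign gives, for i >= 1,
     D G_{i,j} = 4i G_{i-1,j+1} - 2j G_{i,j-1},
   with no boundary term since Q vanishes at the lower limit.  So D^{2k} G_{k,0} is a sum
   over lattice paths from (k,0): each D lowers i (weight 4i) or j (weight -2j), and a path
   is frozen as D^r G_{0,j} once it reaches i = 0.  As j only grows when i drops, every path
   reaches i = 0 within 2k steps, and a path that lowered j b times ends at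
   D^{k-b} G_{0,k-b}.  The weight of all paths with a steps lowering i and b lowering j is
   k!/(k-a)! 4^a (-1)^b (a+b)!/((a-b)! b!), by a Pascal-type recurrence for these
   Bessel-polynomial coefficients. *)

(** * The operator D on real functions *)

Definition DopR (phi : R -> R) (t : R) : R := Derive phi t / t.
Definition DpowR (n : nat) (phi : R -> R) : R -> R := Nat.iter n DopR phi.

Lemma DpowR_S n phi s : DpowR (S n) phi s = Derive (DpowR n phi) s / s.
Proof. reflexivity. Qed.

Lemma DpowR_Sr n phi : DpowR (S n) phi = DpowR n (DopR phi).
Proof. exact (Nat.iter_succ_r n _ DopR phi). Qed.

Lemma Derive_eq_mul_DopR phi s : 0 < s -> Derive phi s = s * DopR phi s.
Proof. intros Hs. unfold DopR. field. lra. Qed.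

Lemma near_in01 (P : R -> Prop) s :
  (forall y, 0 < y < 1 -> P y) -> 0 < s < 1 -> locally s P.
Proof. intros HP Hs. exact (filter_imp _ _ HP (open_and _ _ (open_gt 0) (open_lt 1) s Hs)). Qed.

Lemma DpowR_ext_in01 phi1 phi2 :
  (forall s, 0 < s < 1 -> phi1 s = phi2 s) ->
  forall n s, 0 < s < 1 -> DpowR n phi1 s = DpowR n phi2 s.
Proof.
  intros E n; induction n as [|n IH]; intros s Hs; [exact (E s Hs)|].
  rewrite !DpowR_S. f_equal. apply Derive_ext_loc, near_in01; assumption.
Qed.

Lemma DpowR_scal n c phi s : DpowR n (fun x => c * phi x) s = c * DpowR n phi s.
Proof.
  revert s; induction n as [|n IH]; intros s; [reflexivity|].
  rewrite !DpowR_S, (Derive_ext _ (fun x => c * DpowR n phi x) _ IH), Derive_scal.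
  unfold Rdiv; ring.
Qed.

Definition DsmoothUpto (n : nat) (phi : R -> R) : Prop :=
  forall m, (m <= n)%nat -> forall s, 0 < s < 1 -> ex_derive (DpowR m phi) s.

Lemma DpowR_plus n phi1 phi2 :
  DsmoothUpto n phi1 -> DsmoothUpto n phi2 ->
  forall m s, (m <= n)%nat -> 0 < s < 1 ->
  DpowR m (fun x => phi1 x + phi2 x) s = DpowR m phi1 s + DpowR m phi2 s.
Proof.
  intros H1 H2 m; induction m as [|m IH]; intros s Hm Hs; [reflexivity|].
  rewrite !DpowR_S, (Derive_ext_loc _ (fun x => DpowR m phi1 x + DpowR m phi2 x)).
  - rewrite Derive_plus; [unfold Rdiv; ring|apply H1|apply H2]; (lia || exact Hs).
  - apply near_in01; [|exact Hs]. intros y Hy. apply IH; [lia|exact Hy].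
Qed.

Lemma DsmoothUpto_plus n phi1 phi2 :
  DsmoothUpto n phi1 -> DsmoothUpto n phi2 -> DsmoothUpto n (fun x => phi1 x + phi2 x).
Proof.
  intros H1 H2 m Hm s Hs.
  apply (ex_derive_ext_loc (fun x => DpowR m phi1 x + DpowR m phi2 x)).
  - apply near_in01; [|exact Hs]. intros y Hy.
    symmetry; exact (DpowR_plus n phi1 phi2 H1 H2 m y Hm Hy).
  - apply (ex_derive_plus (DpowR m phi1) (DpowR m phi2)); [apply H1|apply H2]; assumption.
Qed.

Lemma DsmoothUpto_scal n c phi : DsmoothUpto n phi -> DsmoothUpto n (fun x => c * phi x).
Proof.
  intros H m Hm s Hs.
  apply (ex_derive_ext (fun x => c * DpowR m phi x)); [intros y; symmetry; apply DpowR_scal|].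
  apply ex_derive_scal, H; assumption.
Qed.

Lemma DsmoothUpto_ext n phi1 phi2 :
  (forall s, 0 < s < 1 -> phi1 s = phi2 s) -> DsmoothUpto n phi1 -> DsmoothUpto n phi2.
Proof.
  intros E H m Hm s Hs.
  apply (ex_derive_ext_loc (DpowR m phi1)); [|apply H; assumption].
  apply near_in01; [|exact Hs]. intros y Hy. exact (DpowR_ext_in01 _ _ E m y Hy).
Qed.

Lemma DsmoothUpto_S n phi :
  (forall s, 0 < s < 1 -> ex_derive phi s) ->
  DsmoothUpto n (DopR phi) -> DsmoothUpto (S n) phi.
Proof.
  intros H0 H [|m] Hm s Hs; [exact (H0 s Hs)|].
  rewrite DpowR_Sr. apply H; [lia|exact Hs].
Qed.

(* Coquelicot states these for an abstract [AbelianMonoid] or [NormedModule]; the versions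
   at [R] are the ones [rewrite] and [ring] can use on real goals. *)
Lemma sum_n_Rext (u v : nat -> R) n :
  (forall b, (b <= n)%nat -> u b = v b) -> sum_n u n = sum_n v n :> R.
Proof. exact (sum_n_ext_loc u v n). Qed.

Lemma ex_derive_sum_n_R (f : nat -> R -> R) n s :
  (forall b, ex_derive (f b) s) -> ex_derive (fun x => sum_n (fun b => f b x) n) s.
Proof.
  intros H. exact (ex_derive_sum_n (K := R_AbsRing) (V := R_NormedModule) f n s (fun b _ => H b)).
Qed.

Lemma Derive_sum_n_R (f : nat -> R -> R) n s :
  (forall b, ex_derive (f b) s) ->
  Derive (fun x => sum_n (fun b => f b x) n) s = sum_n (fun b => Derive (f b) s) n :> R.
Proof. intros H. exact (Derive_sum_n f n s (fun b _ => H b)). Qed.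

Lemma sum_n_Rplus (u v : nat -> R) n :
  sum_n (fun b => u b + v b) n = sum_n u n + sum_n v n :> R.
Proof. exact (sum_n_plus u v n). Qed.

Lemma sum_n_Rmult_l (c : R) (u : nat -> R) n :
  sum_n (fun b => c * u b) n = c * sum_n u n :> R.
Proof. exact (sum_n_mult_l c u n). Qed.

Lemma sum_n_Sr (u : nat -> R) n : sum_n u (S n) = sum_n u n + u (S n) :> R.
Proof. exact (sum_Sn u n). Qed.

Lemma sum_n_Sl (u : nat -> R) n : sum_n u (S n) = u O + sum_n (fun b => u (S b)) n :> R.
Proof.
  induction n as [|n IH]; rewrite sum_n_Sr; [rewrite !sum_O; reflexivity|].
  rewrite IH, (sum_n_Sr (fun b => u (S b))). ring.
Qed.

Lemma sum_n_zero (u : nat -> R) n :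
  (forall b, (b <= n)%nat -> u b = 0) -> sum_n u n = 0 :> R.
Proof. intros H. rewrite (sum_n_ext_loc _ (fun _ => 0) n H), sum_n_const. ring. Qed.

Lemma sum_n_trunc (u : nat -> R) N M :
  (N <= M)%nat -> (forall b, (N < b <= M)%nat -> u b = 0) -> sum_n u M = sum_n u N :> R.
Proof.
  intros HNM H; induction M as [|M IH]; [replace N with O by lia; reflexivity|].
  destruct (Nat.eq_dec N (S M)) as [->|HN]; [reflexivity|].
  rewrite sum_n_Sr, IH, H by (lia || (intros; apply H; lia)). ring.
Qed.

(** * Path coefficients *)

(* The coefficient of (x/2)^b in the Bessel polynomial y_a. *)
Definition bessel_coef (a b : nat) : R :=
  INR (fact (a + b)) / (INR (fact (a - b)) * INR (fact b)).

Lemma bessel_coef_0 a : bessel_coef a 0 = 1.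
Proof.
  unfold bessel_coef. rewrite Nat.add_0_r, Nat.sub_0_r. simpl. field. apply INR_fact_neq_0.
Qed.

Lemma bessel_coef_rec a b : (b <= a)%nat ->
  bessel_coef (S a) (S b) =
  (if (b <? a)%nat then bessel_coef a (S b) else 0) + 2 * INR (S a - b) * bessel_coef (S a) b.
Proof.
  intros Hba. destruct (Nat.le_exists_sub b a Hba) as [c [-> _]]. unfold bessel_coef.
  replace (S (c + b) + S b)%nat with (S (S (c + b + b))) by lia.
  replace (S (c + b) - S b)%nat with c by lia.
  replace (S (c + b) - b)%nat with (S c) by lia.
  replace (S (c + b) + b)%nat with (S (c + b + b)) by lia.
  pose proof (pos_INR b).
  destruct c as [|c].
  - replace (b <? 0 + b)%nat with false by (symmetry; apply Nat.ltb_ge; lia).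
    cbn [fact]. rewrite !mult_INR, !S_INR, !plus_INR. simpl (INR 0).
    field. repeat split; try apply INR_fact_neq_0; lra.
  - replace (b <? S c + b)%nat with true by (symmetry; apply Nat.ltb_lt; lia).
    replace (S c + b + S b)%nat with (S (S c + b + b)) by lia.
    replace (S c + b - S b)%nat with c by lia.
    cbn [fact]. rewrite !mult_INR, !S_INR, !plus_INR, !S_INR.
    pose proof (pos_INR c). field. repeat split; try apply INR_fact_neq_0; lra.
Qed.

Definition falling_fact (k a : nat) : R := INR (fact k) / INR (fact (k - a)).

Lemma falling_fact_S k a : (a < k)%nat -> falling_fact k (S a) = falling_fact k a * INR (k - a).
Proof.
  intros Hak. unfold falling_fact. replace (k - a)%nat with (S (k - S a)) by lia.
  cbn [fact]. rewrite mult_INR, S_INR. pose proof (pos_INR (k - S a)).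
  field. split; [apply INR_fact_neq_0|lra].
Qed.

(* The total weight of the paths from F_{k,0} to F_{k-a,a-b}, for b <= a < k. *)
Definition expansion_coef (k a b : nat) : R :=
  4 ^ a * (-1) ^ b * falling_fact k a * bessel_coef a b.

Lemma expansion_coef_rec k a b : (a < k)%nat -> (b <= S a)%nat ->
  expansion_coef k (S a) b =
  (if (b <? S a)%nat then 4 * INR (k - a) * expansion_coef k a b else 0)
  + match b with O => 0 | S b' => -2 * INR (S a - b') * expansion_coef k (S a) b' end.
Proof.
  intros Hak Hba. unfold expansion_coef. rewrite falling_fact_S by exact Hak.
  destruct b as [|b].
  - change (0 <? S a)%nat with true. rewrite !bessel_coef_0. simpl pow. ring.
  - change (S b <? S a)%nat with (b <? a)%nat. rewrite bessel_coef_rec by lia.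
    rewrite <- !tech_pow_Rmult. destruct (b <? a)%nat; ring.
Qed.

Lemma expansion_coef_0 k : expansion_coef k 0 0 = 1.
Proof.
  unfold expansion_coef, falling_fact. rewrite bessel_coef_0, Nat.sub_0_r.
  simpl pow. field. apply INR_fact_neq_0.
Qed.

Definition coef_F (k m b : nat) : R :=
  if ((2 * b <=? m) && (m - b <? k))%bool then expansion_coef k (m - b) b else 0.

Definition coef_DF (k m b : nat) : R :=
  if (k + b <=? m)%nat then 4 * coef_F k (k + b - 1) b else 0.

Lemma coef_F_in k m b :
  (2 * b <= m)%nat -> (m - b < k)%nat -> coef_F k m b = expansion_coef k (m - b) b.
Proof.
  intros H1 H2. unfold coef_F.
  rewrite (proj2 (Nat.leb_le _ _) H1), (proj2 (Nat.ltb_lt _ _) H2). reflexivity.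
Qed.

Lemma coef_F_out k m b : (m < 2 * b \/ k <= m - b)%nat -> coef_F k m b = 0.
Proof.
  intros H. unfold coef_F.
  destruct (Nat.leb_spec (2 * b) m), (Nat.ltb_spec (m - b) k); cbn [andb]; lia || reflexivity.
Qed.

Lemma coef_F_rec k m b :
  coef_F k (S m) b =
  (if (S (m - b) <? k)%nat then 4 * INR (k + b - m) * coef_F k m b else 0)
  + match b with O => 0 | S b' => -2 * INR (m - 2 * b') * coef_F k m b' end.
Proof.
  assert (Hcase : (2 * b <= S m /\ S m - b < k \/ (S m < 2 * b \/ k <= S m - b))%nat) by lia.
  destruct Hcase as [[H1 H2]|Hout].
  - rewrite coef_F_in by assumption.
    replace (S m - b)%nat with (S (m - b)) by lia.
    rewrite expansion_coef_rec by lia.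
    rewrite (proj2 (Nat.ltb_lt (S (m - b)) k)) by lia. f_equal.
    + destruct (Nat.ltb_spec b (S (m - b))).
      * rewrite coef_F_in by lia. do 2 f_equal. f_equal. lia.
      * rewrite coef_F_out by lia. ring.
    + destruct b as [|b]; [reflexivity|].
      rewrite coef_F_in by lia.
      replace (S (m - S b)) with (m - b)%nat by lia.
      replace (m - b - b)%nat with (m - 2 * b)%nat by lia. reflexivity.
  - rewrite (coef_F_out k (S m) b Hout).
    replace (if (S (m - b) <? k)%nat then _ else 0) with 0
      by (destruct (Nat.ltb_spec (S (m - b)) k);
          [rewrite coef_F_out by lia|]; ring).
    destruct b as [|b]; [ring|].
    destruct (Nat.eq_dec (2 * b) m) as [<-|Hne].
    + rewrite Nat.sub_diag. simpl INR. ring.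
    + rewrite coef_F_out by lia. ring.
Qed.

(* In the expansion of [D^m F_{k,0}], [b] counts the steps that lowered [j]:
   [F_{k+b-m, m-2b}] is reached after [m-b] steps lowering [i], and
   [D^{m-k-b} F_{0,k-b}] collects the terms that reached [i = 0] at step [k+b]. *)
Definition expand (k m : nat) (X Y : nat -> nat -> R) : R :=
  sum_n (fun b => coef_F k m b * X (k + b - m)%nat (m - 2 * b)%nat) (2 * k)
  + sum_n (fun b => coef_DF k m b * Y (m - k - b)%nat (k - b)%nat) (2 * k).

Lemma expand_step_term k m b (X Y : nat -> nat -> R) :
  (forall j, Y O j = X O j) ->
  coef_F k m b * (4 * INR (k + b - m) * X (pred (k + b - m)) (S (m - 2 * b)))
  + coef_DF k m b * Y (S (m - k - b)) (k - b)%nat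
  = (if (S (m - b) <? k)%nat then 4 * INR (k + b - m) * coef_F k m b else 0)
      * X (k + b - S m)%nat (S m - 2 * b)%nat
  + coef_DF k (S m) b * Y (S m - k - b)%nat (k - b)%nat.
Proof.
  intros HY. unfold coef_DF.
  assert (Hcase : (2 * b <= m /\ m - b < k \/ (m < 2 * b \/ k <= m - b))%nat) by lia.
  destruct Hcase as [[H1 H2]|Hout].
  - rewrite (proj2 (Nat.leb_gt (k + b) m)) by lia.
    destruct (Nat.ltb_spec (S (m - b)) k).
    + rewrite (proj2 (Nat.leb_gt (k + b) (S m))) by lia.
      replace (k + b - S m)%nat with (pred (k + b - m)) by lia.
      replace (S m - 2 * b)%nat with (S (m - 2 * b)) by lia. ring.
    + rewrite (proj2 (Nat.leb_le (k + b) (S m))) by lia.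
      replace (k + b - 1)%nat with m by lia. replace (S m - k - b)%nat with O by lia.
      rewrite HY. replace (k + b - m)%nat with 1%nat by lia.
      replace (S (m - 2 * b)) with (k - b)%nat by lia. cbn [pred INR]. ring.
  - rewrite (coef_F_out k m b Hout).
    replace (if (S (m - b) <? k)%nat then 4 * INR (k + b - m) * 0 else 0) with 0
      by (destruct (S (m - b) <? k)%nat; ring).
    destruct (Nat.leb_spec (k + b) m).
    + rewrite (proj2 (Nat.leb_le (k + b) (S m))) by lia.
      replace (S m - k - b)%nat with (S (m - k - b)) by lia. ring.
    + destruct (Nat.leb_spec (k + b) (S m)); [|ring].
      replace (k + b - 1)%nat with m by lia. rewrite (coef_F_out k m b Hout). ring.
Qed.

Lemma expand_step k m (X Y : nat -> nat -> R) :
  (m < 2 * k)%nat -> (forall j, Y O j = X O j) ->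
  expand k m (fun i j => 4 * INR i * X (pred i) (S j) - 2 * INR j * X i (pred j))
             (fun r j => Y (S r) j)
  = expand k (S m) X Y.
Proof.
  intros Hm HY. unfold expand. cbv beta.
  set (LA := fun b =>
    coef_F k m b * (4 * INR (k + b - m) * X (pred (k + b - m)) (S (m - 2 * b)))).
  set (LB := fun b =>
    coef_F k m b * (- 2 * INR (m - 2 * b) * X (k + b - m)%nat (pred (m - 2 * b)))).
  set (RA := fun b => (if (S (m - b) <? k)%nat then 4 * INR (k + b - m) * coef_F k m b else 0)
                        * X (k + b - S m)%nat (S m - 2 * b)%nat).
  set (RB := fun b => (match b with O => 0 | S b' => -2 * INR (m - 2 * b') * coef_F k m b' end)
                        * X (k + b - S m)%nat (S m - 2 * b)%nat).
  rewrite (sum_n_Rext (fun b => coef_F k m b * _) (fun b => LA b + LB b))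
    by (intros b _; unfold LA, LB; ring).
  rewrite (sum_n_Rext (fun b => coef_F k (S m) b * _) (fun b => RA b + RB b))
    by (intros b _; unfold RA, RB; rewrite coef_F_rec; ring).
  rewrite !sum_n_Rplus.
  (* The j-lowering terms of step m reappear at step m+1 with b shifted by one. *)
  assert (HB : sum_n LB (2 * k) = sum_n RB (2 * k) :> R).
  { replace (2 * k)%nat with (S (2 * k - 1)) by lia.
    rewrite (sum_n_Sl RB), (sum_n_trunc LB (2 * k - 1))
      by (lia || (intros b Hb; unfold LB; rewrite coef_F_out by lia; ring)).
    replace (RB O) with 0 by (unfold RB; simpl; ring). rewrite Rplus_0_l.
    apply sum_n_Rext. intros b _. unfold LB, RB.
    replace (k + S b - S m)%nat with (k + b - m)%nat by lia.
    replace (S m - 2 * S b)%nat with (pred (m - 2 * b)) by lia. ring. }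
  assert (HA : sum_n LA (2 * k)
               + sum_n (fun b => coef_DF k m b * Y (S (m - k - b)) (k - b)%nat) (2 * k)
             = sum_n RA (2 * k)
               + sum_n (fun b => coef_DF k (S m) b * Y (S m - k - b)%nat (k - b)%nat) (2 * k)).
  { rewrite <- !sum_n_Rplus. apply sum_n_Rext. intros b _. apply expand_step_term, HY. }
  lra.
Qed.

Lemma coef_DF_2k k b : (b < k)%nat ->
  coef_DF k (2 * k) b =
  INR (fact k) * 4 ^ k
  * ((-1) ^ b * INR (fact (k - 1 + b)) / (INR (fact (k - 1 - b)) * INR (fact b))).
Proof.
  intros Hbk. unfold coef_DF. rewrite (proj2 (Nat.leb_le (k + b) (2 * k))) by lia.
  rewrite coef_F_in by lia. replace (k + b - 1 - b)%nat with (k - 1)%nat by lia.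
  unfold expansion_coef, falling_fact, bessel_coef.
  replace (k - (k - 1))%nat with 1%nat by lia.
  replace (4 ^ k) with (4 * 4 ^ (k - 1)) by (replace k with (S (k - 1)) at 2 by lia; reflexivity).
  simpl (fact 1). simpl (INR 1). field. split; apply INR_fact_neq_0.
Qed.

(** * Iterating D on a family satisfying the recurrence *)

Section Expansion.

Variable F : nat -> nat -> R -> R.
Hypothesis F_smooth : forall i j n, DsmoothUpto n (F i j).
Hypothesis DopR_F : forall i j s, (1 <= i)%nat -> 0 < s < 1 ->
  DopR (F i j) s = 4 * INR i * F (pred i) (S j) s - 2 * INR j * F i (pred j) s.

Lemma ex_derive_DpowR_F i j n s : 0 < s < 1 -> ex_derive (DpowR n (F i j)) s.
Proof. exact (F_smooth i j n n (le_n n) s). Qed.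

Lemma DopR_expand k m s : (m < 2 * k)%nat -> 0 < s < 1 ->
  DopR (fun x => expand k m (fun i j => F i j x) (fun r j => DpowR r (F 0 j) x)) s
  = expand k (S m) (fun i j => F i j s) (fun r j => DpowR r (F 0 j) s).
Proof.
  intros Hm Hs. rewrite <- expand_step by (assumption || reflexivity).
  assert (HF : forall b, ex_derive (fun x => coef_F k m b * F (k + b - m) (m - 2 * b) x) s)
    by (intros b; apply ex_derive_scal, (ex_derive_DpowR_F _ _ 0), Hs).
  assert (HDF : forall b, ex_derive (fun x => coef_DF k m b * DpowR (m - k - b) (F 0 (k - b)) x) s)
    by (intros b; apply ex_derive_scal, ex_derive_DpowR_F, Hs).
  unfold DopR, expand. cbv beta.
  rewrite Derive_plus by (apply ex_derive_sum_n_R; first [apply HF|apply HDF]).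
  rewrite !Derive_sum_n_R by first [apply HF|apply HDF].
  rewrite (sum_n_Rext (fun b => Derive (fun x => coef_F k m b * _) s)
    (fun b => s * (coef_F k m b * (4 * INR (k + b - m) * F (pred (k + b - m)) (S (m - 2 * b)) s
                   - 2 * INR (m - 2 * b) * F (k + b - m)%nat (pred (m - 2 * b)) s)))).
  2: { intros b _. rewrite Derive_scal, (Derive_eq_mul_DopR _ s) by lra.
       destruct (Nat.lt_ge_cases (m - b) k); [destruct (Nat.le_gt_cases (2 * b) m)|].
       - rewrite DopR_F by (lia || assumption). ring.
       - rewrite coef_F_out by lia. ring.
       - rewrite coef_F_out by lia. ring. }
  rewrite (sum_n_Rext (fun b => Derive (fun x => coef_DF k m b * _) s)
    (fun b => s * (coef_DF k m b * DpowR (S (m - k - b)) (F 0 (k - b)) s))).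
  2: { intros b _. rewrite Derive_scal, DpowR_S. field. lra. }
  rewrite !sum_n_Rmult_l. field. lra.
Qed.

Lemma DpowR_expand k m s : (1 <= k)%nat -> (m <= 2 * k)%nat -> 0 < s < 1 ->
  DpowR m (F k 0) s = expand k m (fun i j => F i j s) (fun r j => DpowR r (F 0 j) s).
Proof.
  intros Hk; revert s; induction m as [|m IH]; intros s Hm Hs.
  - unfold expand. rewrite (sum_n_zero (fun b => coef_DF k 0 b * _)).
    2: { intros b _. unfold coef_DF. rewrite (proj2 (Nat.leb_gt (k + b) 0)) by lia. ring. }
    rewrite (sum_n_trunc _ 0 (2 * k)) by (lia || (intros b Hb; rewrite coef_F_out by lia; ring)).
    rewrite sum_O, coef_F_in, expansion_coef_0 by lia.
    replace (k + 0 - 0)%nat with k by lia. simpl (0 - 2 * 0)%nat. simpl DpowR. ring.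
  - rewrite DpowR_S, (Derive_ext_loc _ (fun x => expand k m (fun i j => F i j x)
                                                          (fun r j => DpowR r (F 0 j) x))).
    + exact (DopR_expand k m s ltac:(lia) Hs).
    + apply near_in01; [|exact Hs]. intros y Hy. apply IH; [lia|exact Hy].
Qed.

Theorem DpowR_F_2k k t : (1 <= k)%nat -> 0 < t < 1 ->
  DpowR (2 * k) (F k 0) t =
  INR (fact k) * 4 ^ k *
  sum_n (fun b => (-1) ^ b * INR (fact (k - 1 + b)) / (INR (fact (k - 1 - b)) * INR (fact b))
                  * DpowR (k - b) (F 0 (k - b)) t) (k - 1).
Proof.
  intros Hk Ht. rewrite (DpowR_expand k (2 * k)) by (lia || assumption). unfold expand.
  rewrite (sum_n_zero (fun b => coef_F k (2 * k) b * _))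
    by (intros b _; rewrite coef_F_out by lia; ring).
  rewrite (sum_n_trunc _ (k - 1) (2 * k)).
  2: lia.
  2: { intros b Hb. unfold coef_DF. rewrite coef_F_out by lia. destruct (_ <=? _)%nat; ring. }
  rewrite Rplus_0_l, <- sum_n_Rmult_l. apply sum_n_Rext. intros b Hb.
  rewrite coef_DF_2k by lia. replace (2 * k - k - b)%nat with (k - b)%nat by lia. ring.
Qed.

End Expansion.

(** * The integrals G_{i,j} *)

Definition kern (i j : nat) (t u : R) : R := u * Q t u ^ i * (u ^ 2 + 1 - t ^ 2) ^ j.

Definition kern_dt (i j : nat) (t u : R) : R :=
  t * (4 * INR i * kern (pred i) (S j) t u - 2 * INR j * kern i (pred j) t u).

Lemma kern_derive i j t u : is_derive (fun z => kern i j z u) t (kern_dt i j t u).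
Proof.
  unfold kern_dt, kern, Q. auto_derive; [exact I|].
  unfold Rminus. destruct i as [|i], j as [|j]; cbn [Nat.pred pow];
    rewrite ?Rmult_0_l, ?Rmult_0_r, ?Rmult_1_l, ?Rmult_1_r; ring.
Qed.

Lemma kern_lower_limit i j s : kern i j s (1 - s) = 0 ^ i * 2 ^ j * (1 - s) ^ S j.
Proof.
  unfold kern. replace (Q s (1 - s)) with 0 by (unfold Q; ring).
  replace ((1 - s) ^ 2 + 1 - s ^ 2) with (2 * (1 - s)) by ring.
  rewrite Rpow_mult_distr. cbn [pow]. ring.
Qed.

Lemma continuity_2d_pt_pow f x y n :
  continuity_2d_pt f x y -> continuity_2d_pt (fun u v => f u v ^ n) x y.
Proof.
  intros H. induction n as [|n IH]; [exact (continuity_2d_pt_const x y 1)|].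
  exact (continuity_2d_pt_mult f (fun u v => f u v ^ n) x y H IH).
Qed.

Lemma kern_continuous_2d i j x y : continuity_2d_pt (kern i j) x y.
Proof.
  unfold kern, Q.
  repeat first [ apply continuity_2d_pt_id1 | apply continuity_2d_pt_id2
    | apply continuity_2d_pt_const | apply continuity_2d_pt_mult
    | apply continuity_2d_pt_minus | apply continuity_2d_pt_plus
    | apply (continuity_2d_pt_pow (fun u v => _)) ].
Qed.

Definition GR (g : R -> R) (i j : nat) (t : R) : R :=
  RInt (fun u => kern i j t u * g u) (1 - t) 1.

Section Kernel.

Variable g : R -> R.
Hypothesis g_smooth : forall x, 0 < x -> forall n, ex_derive_n g n x.

Lemma g_continuous x : 0 < x -> continuous g x.
Proof. intros Hx. exact (ex_derive_continuous g x (g_smooth x Hx 1)). Qed.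

Lemma kern_g_continuous i j t u : 0 < u -> continuous (fun v => kern i j t v * g v) u.
Proof.
  intros Hu. apply (continuous_mult (fun v => kern i j t v) g); [|exact (g_continuous u Hu)].
  apply (ex_derive_continuous (fun v => kern i j t v)). unfold kern, Q. auto_derive. exact I.
Qed.

Lemma ex_RInt_kern_g i j t a b : 0 < a -> 0 < b -> ex_RInt (fun u => kern i j t u * g u) a b.
Proof.
  intros Ha Hb. apply (ex_RInt_continuous (V := R_CompleteNormedModule)). intros u [Hu _].
  apply kern_g_continuous. apply Rlt_le_trans with (2 := Hu), Rmin_glb_lt; assumption.
Qed.

Lemma kern_dt_g_continuous_2d i j x y : 0 < y ->
  continuity_2d_pt (fun t u => Derive (fun z => kern i j z u * g u) t) x y.
Proof.
  intros Hy.
  apply (continuity_2d_pt_ext (fun t u => kern_dt i j t u * g u)).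
  { intros t u. rewrite Derive_scal_l. f_equal. symmetry. apply is_derive_unique, kern_derive. }
  apply (continuity_2d_pt_mult (kern_dt i j) (fun _ u => g u)).
  - unfold kern_dt.
    repeat first [ apply kern_continuous_2d | apply continuity_2d_pt_id1
      | apply continuity_2d_pt_const | apply continuity_2d_pt_mult | apply continuity_2d_pt_minus ].
  - refine (continuity_1d_2d_pt_comp g (fun _ u => u) x y _ (continuity_2d_pt_id2 x y)).
    apply continuity_pt_filterlim, g_continuous, Hy.
Qed.

Lemma is_RInt_kern_dt_g i j s : 0 < s < 1 ->
  is_RInt (fun u => Derive (fun z => kern i j z u * g u) s) (1 - s) 1
    (s * (4 * INR i * GR g (pred i) (S j) s - 2 * INR j * GR g i (pred j) s)).
Proof.
  intros Hs.
  assert (Hint : forall i' j', is_RInt (fun u => kern i' j' s u * g u) (1 - s) 1 (GR g i' j' s))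
    by (intros; apply (RInt_correct (V := R_CompleteNormedModule)), ex_RInt_kern_g; lra).
  apply (is_RInt_ext (fun u => s * (4 * INR i * (kern (pred i) (S j) s u * g u)
                                    - 2 * INR j * (kern i (pred j) s u * g u)))).
  - intros u _. rewrite Derive_scal_l.
    replace (Derive _ s) with (kern_dt i j s u)
      by (symmetry; apply is_derive_unique, kern_derive).
    unfold kern_dt. match goal with |- ?a = ?b => change (a = b :> R) end. ring.
  - exact (is_RInt_scal _ _ _ s _ (is_RInt_minus _ _ _ _ _ _
             (is_RInt_scal _ _ _ (4 * INR i) _ (Hint (pred i) (S j)))
             (is_RInt_scal _ _ _ (2 * INR j) _ (Hint i (pred j))))).
Qed.

Lemma GR_derive i j s : 0 < s < 1 ->
  is_derive (GR g i j) s
    (s * (4 * INR i * GR g (pred i) (S j) s - 2 * INR j * GR g i (pred j) s)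
     + kern i j s (1 - s) * g (1 - s)).
Proof.
  intros Hs.
  replace (s * _ + _) with (RInt (fun u => Derive (fun z => kern i j z u * g u) s) (1 - s) 1
            + - (kern i j s (1 - s) * g (1 - s)) * (-1) + kern i j s 1 * g 1 * 0)
    by (rewrite (is_RInt_unique _ _ _ _ (is_RInt_kern_dt_g i j s Hs)); ring).
  assert (Hhalf : 0 < (1 - s) / 2) by lra.
  apply (is_derive_RInt_param_bound_comp (fun t u => kern i j t u * g u)
                                          (fun t => 1 - t) (fun _ => 1)).
  - apply filter_forall. intros t. apply ex_RInt_kern_g; lra.
  - exists (mkposreal _ Hhalf). apply filter_forall. intros t. apply ex_RInt_kern_g; simpl; lra.
  - exists (mkposreal _ Hhalf). apply filter_forall. intros t. apply ex_RInt_kern_g; simpl; lra.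
  - auto_derive; [exact I|ring].
  - auto_derive; [exact I|ring].
  - exists (mkposreal 1 Rlt_0_1). apply filter_forall. intros t u _.
    apply ex_derive_mult; [exists (kern_dt i j t u); apply kern_derive | apply ex_derive_const].
  - intros u [Hu _]. apply kern_dt_g_continuous_2d.
    apply Rlt_le_trans with (2 := Hu), Rmin_glb_lt; lra.
  - exists (mkposreal _ Hhalf). intros t u _ Hu. apply Rabs_def2 in Hu. simpl in Hu.
    apply kern_dt_g_continuous_2d. lra.
  - exists (mkposreal _ Hhalf). intros t u _ Hu. apply Rabs_def2 in Hu. simpl in Hu.
    apply kern_dt_g_continuous_2d. lra.
  - apply continuity_pt_filterlim, kern_g_continuous. lra.
  - apply continuity_pt_filterlim, kern_g_continuous. lra.
Qed.

(* The D-derivatives of the boundary term 2^j (1-s)^(j+1) g(1-s) / s of [DopR (GR g 0 j)]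
   stay in the span of these functions. *)
Definition boundary_term (m p q : nat) (s : R) : R := (1 - s) ^ p * Derive_n g q (1 - s) / s ^ m.

Lemma boundary_term_derive m p q s : 0 < s < 1 ->
  is_derive (boundary_term m p q) s
    (s * (- INR p * boundary_term (S m) (pred p) q s - boundary_term (S m) p (S q) s
          - INR m * boundary_term (S (S m)) p q s)).
Proof.
  intros Hs. unfold boundary_term.
  assert (Hpow : forall n, s ^ n <> 0) by (intros n; apply pow_nonzero; lra).
  auto_derive; [repeat split; [exact (g_smooth (1 + - s) ltac:(lra) (S q))|apply Hpow]|].
  replace (Derive (fun x => Derive_n g q x) (1 + - s)) with (Derive_n g (S q) (1 + - s))
    by reflexivity.
  replace (1 + - s) with (1 - s) by ring.
  match goal with |- ?a = ?b => change (a = b :> R) end.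
  generalize (Derive_n g q (1 - s)) (Derive_n g (S q) (1 - s)) ((1 - s) ^ pred p) ((1 - s) ^ p).
  intros d0 d1 A B.
  destruct m as [|m]; cbn [pow Nat.pred]; rewrite ?S_INR; simpl INR;
    field; repeat split; first [apply Hpow | lra].
Qed.

Lemma DsmoothUpto_boundary_term n : forall m p q, DsmoothUpto n (boundary_term m p q).
Proof.
  induction n as [|n IH]; intros m p q.
  - intros m' Hm' s Hs. replace m' with O by lia. eexists. exact (boundary_term_derive m p q s Hs).
  - apply DsmoothUpto_S; [intros s Hs; eexists; exact (boundary_term_derive m p q s Hs)|].
    apply (DsmoothUpto_ext n (fun s => - INR p * boundary_term (S m) (pred p) q s
        + (-1 * boundary_term (S m) p (S q) s + - INR m * boundary_term (S (S m)) p q s))).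
    + intros s Hs. unfold DopR. rewrite (is_derive_unique _ _ _ (boundary_term_derive m p q s Hs)).
      field. lra.
    + apply DsmoothUpto_plus; [|apply DsmoothUpto_plus]; apply DsmoothUpto_scal, IH.
Qed.

Lemma DopR_GR i j s : 0 < s < 1 ->
  DopR (GR g i j) s = 4 * INR i * GR g (pred i) (S j) s
     + (- 2 * INR j * GR g i (pred j) s + 0 ^ i * 2 ^ j * boundary_term 1 (S j) 0 s).
Proof.
  intros Hs. unfold DopR, boundary_term.
  rewrite (is_derive_unique _ _ _ (GR_derive i j s Hs)), kern_lower_limit. simpl Derive_n.
  field. lra.
Qed.

Lemma DsmoothUpto_GR n : forall i j, DsmoothUpto n (GR g i j).
Proof.
  induction n as [|n IH]; intros i j.
  - intros m' Hm' s Hs. replace m' with O by lia. eexists. exact (GR_derive i j s Hs).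
  - apply DsmoothUpto_S; [intros s Hs; eexists; exact (GR_derive i j s Hs)|].
    apply (DsmoothUpto_ext n _ _ (fun s Hs => eq_sym (DopR_GR i j s Hs))).
    apply DsmoothUpto_plus; [|apply DsmoothUpto_plus]; apply DsmoothUpto_scal;
      [apply IH|apply IH|apply DsmoothUpto_boundary_term].
Qed.

Lemma DopR_GR_pos i j s : (1 <= i)%nat -> 0 < s < 1 ->
  DopR (GR g i j) s = 4 * INR i * GR g (pred i) (S j) s - 2 * INR j * GR g i (pred j) s.
Proof.
  intros Hi Hs. rewrite DopR_GR by exact Hs.
  destruct i as [|i]; [lia|]. simpl (0 ^ S i). ring.
Qed.

End Kernel.

Corollary DpowR_GR_2k g k t :
  (forall x, 0 < x -> forall n, ex_derive_n g n x) -> (1 <= k)%nat -> 0 < t < 1 ->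
  DpowR (2 * k) (GR g k 0) t =
  INR (fact k) * 4 ^ k *
  sum_n (fun b => (-1) ^ b * INR (fact (k - 1 + b)) / (INR (fact (k - 1 - b)) * INR (fact b))
                  * DpowR (k - b) (GR g 0 (k - b)) t) (k - 1).
Proof.
  intros Hg. apply DpowR_F_2k; intros; [apply DsmoothUpto_GR|apply DopR_GR_pos]; assumption.
Qed.

(** * Complex-valued functions *)

Lemma Dpow_components n phi t :
  Dpow n phi t = (DpowR n (fun s => Re (phi s)) t, DpowR n (fun s => Im (phi s)) t).
Proof.
  revert t; induction n as [|n IH]; intros t; [exact (surjective_pairing (phi t))|].
  change (Dop (Dpow n phi) t = (DopR (DpowR n (fun s => Re (phi s))) t,
                                DopR (DpowR n (fun s => Im (phi s))) t)).
  unfold Dop, DopR. rewrite !(Derive_ext _ _ t (fun s => f_equal _ (IH s))). reflexivity.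
Qed.

Lemma G_components f i j s :
  (forall x, 0 < x -> smooth_at f x) -> 0 < s < 1 ->
  G f i j s = (GR (fun u => Re (f u)) i j s, GR (fun u => Im (f u)) i j s).
Proof.
  intros Hf Hs. apply (is_RInt_unique (V := C_R_CompleteNormedModule)).
  apply (is_RInt_fct_extend_pair (U := R_NormedModule) (V := R_NormedModule));
    (eapply is_RInt_ext; [|apply (RInt_correct (V := R_CompleteNormedModule)), ex_RInt_kern_g;
                          [intros x Hx n; apply Hf, Hx|lra|lra]]);
    intros u _; unfold kern, Re, Im; destruct (f u); simpl; ring.
Qed.

Lemma sum_n_scal_components (c : nat -> R) (u : nat -> C) n :
  sum_n (fun b => scal (c b) (u b)) n =
  (sum_n (fun b => c b * Re (u b)) n, sum_n (fun b => c b * Im (u b)) n).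
Proof.
  induction n as [|n IH]; [rewrite !sum_O; reflexivity|]. rewrite !sum_Sn, IH. reflexivity.
Qed.

Theorem theorem3p7 (f : R -> C) (rho : R) (k : nat) (t : R) :
  (forall x : R, 0 < x -> smooth_at f x) ->
  rho < 1 ->
  (forall u : R, rho < u -> f u = 0%C) ->
  (1 <= k)%nat ->
  0 < t < 1 ->
  Dpow (2 * k) (h f k) t = Dpow (2 * k) (G f k 0) t /\
  Dpow (2 * k) (G f k 0) t =
    scal (INR (fact k) * 4 ^ k)
      (sum_n (fun j : nat =>
         scal ((-1) ^ j * INR (fact (k - 1 + j))
                 / (INR (fact (k - 1 - j)) * INR (fact j)))
              (Dpow (k - j) (G f 0 (k - j)) t))
         (k - 1)).
Proof.
  intros Hf _ _ Hk Ht. split; [reflexivity|].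
  assert (Dpow_G : forall n i j, Dpow n (G f i j) t =
            (DpowR n (GR (fun u => Re (f u)) i j) t, DpowR n (GR (fun u => Im (f u)) i j) t)).
  { intros n i j. rewrite Dpow_components.
    f_equal; apply DpowR_ext_in01; try exact Ht; intros s Hs; rewrite (G_components f i j s Hf Hs);
      reflexivity. }
  rewrite Dpow_G, sum_n_scal_components.
  rewrite !DpowR_GR_2k by ((intros x Hx n; apply Hf, Hx) || assumption).
  apply injective_projections; simpl fst; simpl snd;
    apply (f_equal (Rmult _)), sum_n_Rext; intros b _; rewrite Dpow_G; reflexivity.
Qed.
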